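(* Let $\mathcal{H}$ be a real or complex Hilbert space and let $S:\mathcal{H}\to\mathcal{H}$ be a (not necessarily densely defined) linear operator. Let $M_{S,S}$ be the operator on $\mathcal{H}\times\mathcal{H}$ with domain $\operatorname{dom} S\times\operatorname{dom} S$ given by $M_{S,S}(h,k)=(-Sk,Sh)$. The following are equivalent: (i) $S$ is densely defined and self-adjoint; (ii) every non-zero real number $t$ is in the resolvent set of $M_{S,S}$ and $\|R_{S,S}(t)\|\le 1/|t|$ for all real $t\neq 0$.
   Context: A scalar $\lambda$ is in the resolvent set of $M_{S,S}$ if $M_{S,S}-\lambda I$ is injective with everywhere defined bounded inverse on $\mathcal{H}\times\mathcal{H}$; then $R_{S,S}(\lambda):=(M_{S,S}-\lambda I)^{-1}$. The norm is the operator norm for the product Hilbert space $\mathcal{H}\times\mathcal{H}$. *)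

From HB Require Import structures.
From mathcomp Require Import all_boot all_order all_algebra.
From mathcomp Require Import complex.
From mathcomp Require Import reals.

Set Implicit Arguments.
Unset Strict Implicit.
Unset Printing Implicit Defensive.

Import Order.TTheory GRing.Theory Num.Theory.
Local Open Scope ring_scope.

Section Hilbert.
Variables (K : numFieldType) (conj : K -> K) (V : lmodType K).
Variable ip : V -> V -> K.   (* inner product, linear in the first argument *)

Definition nrm2 (x : V) : K := ip x x.

Definition is_hilbert : Prop :=
  [/\ (forall a x y z, ip (a *: x + y) z = a * ip x z + ip y z),
      (forall x y, ip x y = conj (ip y x)),
      (forall x, 0 <= ip x x),
      (forall x, ip x x = 0 -> x = 0)
    &
      (forall u : nat -> V,
         (forall e : K, 0 < e -> exists N : nat, forall m n : nat,
             (N <= m)%N -> (N <= n)%N -> nrm2 (u m - u n) < e ^+ 2) ->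
         exists l : V, forall e : K, 0 < e -> exists N : nat, forall n : nat,
             (N <= n)%N -> nrm2 (u n - l) < e ^+ 2)].

Definition is_linear_operator (D : V -> Prop) (S : V -> V) : Prop :=
  [/\ D 0,
      (forall a x y, D x -> D y -> D (a *: x + y))
    & (forall a x y, D x -> D y -> S (a *: x + y) = a *: S x + S y)].

Definition densely_defined (D : V -> Prop) : Prop :=
  forall x e, 0 < e -> exists2 y, D y & nrm2 (x - y) < e ^+ 2.

Definition adjoint_graph (D : V -> Prop) (S : V -> V) (y z : V) : Prop :=
  forall x, D x -> ip (S x) y = ip x z.

(* S* = S (equality of operators, i.e. of graphs) *)
Definition self_adjoint (D : V -> Prop) (S : V -> V) : Prop :=
  forall y z, adjoint_graph D S y z <-> (D y /\ z = S y).

Definition nrm2P (u : V * V) : K := nrm2 u.1 + nrm2 u.2.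

Definition domM (D : V -> Prop) (u : V * V) : Prop := D u.1 /\ D u.2.

Definition MSS (S : V -> V) (u : V * V) : V * V := (- S u.2, S u.1).

Definition MSS_shift (S : V -> V) (lam : K) (u : V * V) : V * V :=
  ((MSS S u).1 - lam *: u.1, (MSS S u).2 - lam *: u.2).

Definition opnorm_le (T : V * V -> V * V) (c : K) : Prop :=
  0 <= c /\ forall u, nrm2P (T u) <= c ^+ 2 * nrm2P u.

Definition bounded_op (T : V * V -> V * V) : Prop := exists c, opnorm_le T c.

Definition is_inverse_shift (D : V -> Prop) (S : V -> V) (lam : K)
    (T : V * V -> V * V) : Prop :=
  (forall u, domM D (T u) /\ MSS_shift S lam (T u) = u) /\
  (forall w, domM D w -> T (MSS_shift S lam w) = w).

Definition in_resolvent (D : V -> Prop) (S : V -> V) (lam : K) : Prop :=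
  (forall w1 w2, domM D w1 -> domM D w2 ->
     MSS_shift S lam w1 = MSS_shift S lam w2 -> w1 = w2) /\
  exists2 T, is_inverse_shift D S lam T & bounded_op T.

Definition corollary_equiv (D : V -> Prop) (S : V -> V) : Prop :=
  (densely_defined D /\ self_adjoint D S) <->
  (forall t : K, t \is Num.real -> t != 0 ->
     in_resolvent D S t /\
     forall T, is_inverse_shift D S t T -> opnorm_le T (`|t|)^-1).

End Hilbert.

(* For symmetric S the operator M = M_{S,S} is skew, <M w, w> = 0, so that
   ||(M - t) w||^2 = ||M w||^2 + t^2 ||w||^2: M - t is injective and its inverse has norm
   at most 1/|t|. Conversely, that bound for every real t <> 0 gives
   2 t <M w, w> <= ||M w||^2 for all t, hence <M w, w> = 0, i.e. S is symmetric.
   If S is self-adjoint, a vector (p, q) orthogonal to the range of M - t satisfies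
   S q = t p and S p = -t q, which by symmetry forces t (||p||^2 + ||q||^2) = 0; so the
   range is dense, and it is closed because the graph of S = S* is closed and M - t is
   bounded below. Conversely, if S is symmetric and M - 1 is onto, then for (y, z) in the
   graph of S* solve (M - 1)(h, k) = (-y, z): then ||y - h||^2 = <S k, y - h> = -||k||^2,
   so y = h lies in dom S and z = S y. Density of dom S follows from self-adjointness, as
   a vector orthogonal to dom S is S* 0 = S 0 = 0.
   The complex case reduces to the real one for the real inner product Re <., .>, which
   has the same norms and adjoints. *)

From HB Require Import structures.
From mathcomp Require Import all_boot all_order all_algebra.
From mathcomp Require Import complex.
From mathcomp Require Import reals.
From mathcomp Require Import boolp classical_sets.
From mathcomp Require Import ring lra.

Set Implicit Arguments.
Unset Strict Implicit.
Unset Printing Implicit Defensive.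
Import Order.TTheory GRing.Theory Num.Theory.
Local Open Scope ring_scope.

Definition eventually (P : nat -> Prop) : Prop :=
  exists N, forall n, (N <= n)%N -> P n.

Lemma eventually_and (P Q : nat -> Prop) :
  eventually P -> eventually Q -> eventually (fun n => P n /\ Q n).
Proof.
move=> [N1 P_N1] [N2 Q_N2]; exists (maxn N1 N2) => n; rewrite geq_max => /andP[n1 n2].
by split; [apply: P_N1 | apply: Q_N2].
Qed.

Section RealFacts.
Variable R : realType.

Definition eps (n : nat) : R := n.+1%:R^-1.

Lemma eps_gt0 n : 0 < eps n.
Proof. by rewrite invr_gt0 ltr0Sn. Qed.

Lemma eventually_eps_lt (d : R) : 0 < d -> eventually (fun n => eps n < d).
Proof.
move=> d_gt0; exists (Num.Def.archi_bound d^-1) => n le_bound_n.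
have lt_inv_d : d^-1 < n.+1%:R.
  apply: (lt_le_trans (archi_boundP _)); first by rewrite invr_ge0 ltW.
  by rewrite ler_nat (leq_trans le_bound_n).
by rewrite -(invrK d) ltf_pV2 ?posrE ?invr_gt0 ?ltr0Sn.
Qed.

Lemma forall_gt0_sqr (P : R -> Prop) :
  (forall e, 0 < e -> P e) <-> (forall e, 0 < e -> P (e ^+ 2)).
Proof.
split=> [P_pos e e_gt0 | P_sqr e e_gt0]; first by apply: P_pos; rewrite exprn_gt0.
by rewrite -[e]sqr_sqrtr ?ltW //; apply: P_sqr; rewrite sqrtr_gt0.
Qed.

Lemma small_sqr_eq0 (y K : R) : (forall e, 0 < e -> y ^+ 2 <= e * K) -> y = 0.
Proof.
move=> small; apply/eqP; rewrite -sqrf_eq0 eq_le sqr_ge0 andbT.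
apply/ler_addgt0Pr => e e_gt0; rewrite add0r.
have K1_gt0 : 0 < `|K| + 1 by rewrite ltr_wpDl.
set f := e / (`|K| + 1).
have f_gt0 : 0 < f by rewrite divr_gt0.
have f_K : f * (`|K| + 1) = e by rewrite divfK ?gt_eqF.
have := ler_wpM2l (ltW f_gt0) (ler_norm K).
have := small f f_gt0; lra.
Qed.

Lemma sqrD_le (a b : R) : (a + b) ^+ 2 <= 2 * a ^+ 2 + 2 * b ^+ 2.
Proof. by have := sqr_ge0 (a - b); rewrite !expr2; lra. Qed.

Lemma discriminant_le (A B C : R) :
  0 <= C -> (forall s, 0 <= A - 2 * s * B + s ^+ 2 * C) -> B ^+ 2 <= A * C.
Proof.
move=> C_ge0 quad_ge0; have [C0|C_neq0] := eqVneq C 0.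
  have [B0|B_neq0] := eqVneq B 0; first by rewrite B0 C0; lra.
  have := quad_ge0 ((A + 1) / (2 * B)); rewrite C0 mulr0 addr0.
  have -> : 2 * ((A + 1) / (2 * B)) * B = A + 1 by field; rewrite B_neq0.
  lra.
have C_gt0 : 0 < C by rewrite lt_def C_neq0.
have := quad_ge0 (B / C).
have -> : A - 2 * (B / C) * B + (B / C) ^+ 2 * C = (A * C - B ^+ 2) / C by field.
by rewrite pmulr_lge0 ?invr_gt0 // subr_ge0.
Qed.

End RealFacts.

Section LeftLinear.
Variables (K : numFieldType) (conj : K -> K) (W : lmodType K) (ip : W -> W -> K).
Hypothesis hW : is_hilbert conj ip.

Lemma ip0l z : ip 0 z = 0.
Proof.
case: hW => /(_ 1 0 0 z); rewrite scaler0 addr0 mul1r => ip0D _ _ _ _.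
by apply: (@addrI _ (ip 0 z)); rewrite addr0 -ip0D.
Qed.

Lemma ipDl x y z : ip (x + y) z = ip x z + ip y z.
Proof. by case: hW => /(_ 1 x y z); rewrite scale1r mul1r. Qed.

Lemma ipZl a x z : ip (a *: x) z = a * ip x z.
Proof. by case: hW => /(_ a x 0 z); rewrite addr0 ip0l addr0. Qed.

Lemma ipNl x z : ip (- x) z = - ip x z.
Proof. by rewrite -scaleN1r ipZl mulN1r. Qed.

Lemma ipBl x y z : ip (x - y) z = ip x z - ip y z.
Proof. by rewrite ipDl ipNl. Qed.

End LeftLinear.

Section InnerProduct.
Variables (R : realType) (W : lmodType R) (ip : W -> W -> R).

Definition cvg_to (u : nat -> W) (l : W) : Prop :=
  forall e, 0 < e -> eventually (fun n => nrm2 ip (u n - l) < e).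

Definition cauchy (u : nat -> W) : Prop :=
  forall e, 0 < e -> exists N, forall m n,
    (N <= m)%N -> (N <= n)%N -> nrm2 ip (u m - u n) < e.

Definition complete : Prop := forall u, cauchy u -> exists l, cvg_to u l.

Lemma completeE :
  complete <->
  (forall u : nat -> W,
     (forall e : R, 0 < e -> exists N : nat, forall m n : nat,
         (N <= m)%N -> (N <= n)%N -> nrm2 ip (u m - u n) < e ^+ 2) ->
     exists l : W, forall e : R, 0 < e -> exists N : nat, forall n : nat,
         (N <= n)%N -> nrm2 ip (u n - l) < e ^+ 2).
Proof.
pose cauchy_at u e := exists N, forall m n,
  (N <= m)%N -> (N <= n)%N -> nrm2 ip (u m - u n) < e.
pose close_at u l e := eventually (fun n => nrm2 ip (u n - l) < e).
split=> cplt u cu.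
  have [l ul] := cplt u ((forall_gt0_sqr (cauchy_at u)).2 cu).
  by exists l; apply: (forall_gt0_sqr (close_at u l)).1.
have [l ul] := cplt u ((forall_gt0_sqr (cauchy_at u)).1 cu).
by exists l; apply: (forall_gt0_sqr (close_at u l)).2.
Qed.

Hypothesis hW : is_hilbert id ip.

Lemma ipC x y : ip x y = ip y x.
Proof. by case: hW => _ ->. Qed.

Lemma ip0r z : ip z 0 = 0.
Proof. by rewrite ipC (ip0l hW). Qed.

Lemma ipDr x y z : ip z (x + y) = ip z x + ip z y.
Proof. by rewrite ipC (ipDl hW) !(ipC z). Qed.

Lemma ipZr a x z : ip z (a *: x) = a * ip z x.
Proof. by rewrite ipC (ipZl hW) ipC. Qed.

Lemma ipNr x z : ip z (- x) = - ip z x.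
Proof. by rewrite ipC (ipNl hW) ipC. Qed.

Lemma ipBr x y z : ip z (x - y) = ip z x - ip z y.
Proof. by rewrite ipDr ipNr. Qed.

Lemma nrm2_ge0 x : 0 <= nrm2 ip x.
Proof. by case: hW => _ _ /(_ x). Qed.

Lemma nrm2_eq0 x : nrm2 ip x = 0 -> x = 0.
Proof. by case: hW => _ _ _ /(_ x). Qed.

Lemma nrm2D x y : nrm2 ip (x + y) = nrm2 ip x + 2 * ip x y + nrm2 ip y.
Proof. by rewrite /nrm2 !(ipDl hW) !ipDr (ipC y x); ring. Qed.

Lemma nrm2B x y : nrm2 ip (x - y) = nrm2 ip x - 2 * ip x y + nrm2 ip y.
Proof. by rewrite /nrm2 !(ipBl hW) !ipBr (ipC y x); ring. Qed.

Lemma nrm2Z a x : nrm2 ip (a *: x) = a ^+ 2 * nrm2 ip x.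
Proof. by rewrite /nrm2 (ipZl hW) ipZr; ring. Qed.

Lemma nrm2N x : nrm2 ip (- x) = nrm2 ip x.
Proof. by rewrite -scaleN1r nrm2Z sqrrN expr1n mul1r. Qed.

Lemma nrm2_subC x y : nrm2 ip (x - y) = nrm2 ip (y - x).
Proof. by rewrite -opprB nrm2N. Qed.

Lemma parallelogram x y :
  nrm2 ip (x + y) + nrm2 ip (x - y) = 2 * nrm2 ip x + 2 * nrm2 ip y.
Proof. by rewrite nrm2D nrm2B; ring. Qed.

Lemma nrm2D_le x y : nrm2 ip (x + y) <= 2 * nrm2 ip x + 2 * nrm2 ip y.
Proof. by rewrite -parallelogram lerDl nrm2_ge0. Qed.

Lemma cauchy_schwarz x y : ip x y ^+ 2 <= nrm2 ip x * nrm2 ip y.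
Proof.
apply: discriminant_le => [|s]; first exact: nrm2_ge0.
by rewrite -nrm2Z -[_ * ip x y]mulrA -ipZr -nrm2B nrm2_ge0.
Qed.

Lemma cauchy_cvg u : cauchy u -> exists l, cvg_to u l.
Proof. by case: hW => _ _ _ _ /completeE; apply. Qed.

Lemma cvg_cauchy u l : cvg_to u l -> cauchy u.
Proof.
move=> ul e e_gt0; have [N ulN] := ul (e / 4%:R) (divr_gt0 e_gt0 (ltr0Sn _ 3)).
exists N => m n Nm Nn.
have -> : u m - u n = (u m - l) + - (u n - l) by rewrite opprB addrA subrK.
by apply: (le_lt_trans (nrm2D_le _ _)); rewrite nrm2N; have := ulN m Nm; have := ulN n Nn; lra.
Qed.

Lemma cvg_toD u v a b :
  cvg_to u a -> cvg_to v b -> cvg_to (fun n => u n + v n) (a + b).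
Proof.
move=> ua vb e e_gt0; have e4_gt0 : 0 < e / 4%:R by rewrite divr_gt0 ?ltr0Sn.
have [N uvN] := eventually_and (ua _ e4_gt0) (vb _ e4_gt0).
exists N => n /uvN [un vn].
rewrite opprD addrACA; apply: (le_lt_trans (nrm2D_le _ _)); lra.
Qed.

Lemma cvg_toN u a : cvg_to u a -> cvg_to (fun n => - u n) (- a).
Proof. by move=> ua e /ua [N uaN]; exists N => n /uaN; rewrite -opprD nrm2N. Qed.

Lemma cvg_toZ c u a : cvg_to u a -> cvg_to (fun n => c *: u n) (c *: a).
Proof.
move=> ua e e_gt0; have c1_gt0 : 0 < c ^+ 2 + 1 by rewrite ltr_wpDl ?sqr_ge0.
have [N uaN] := ua _ (divr_gt0 e_gt0 c1_gt0); exists N => n /uaN ltN.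
rewrite -scalerBr nrm2Z; apply: le_lt_trans (_ : c ^+ 2 * (e / (c ^+ 2 + 1)) < e).
  by rewrite ler_wpM2l ?sqr_ge0 ?ltW.
by rewrite mulrA ltr_pdivrMr //; lra.
Qed.

End InnerProduct.

(* A minimizing sequence for the distance from [x] to the subspace [C] is Cauchy by the
   parallelogram law, and its limit [p] has [x - p] orthogonal to [C]. *)
Section DenseSubspace.
Variables (R : realType) (W : lmodType R) (ip : W -> W -> R).
Hypothesis hW : is_hilbert id ip.
Variable C : W -> Prop.
Hypotheses (C0 : C 0) (C_comb : forall a x y, C x -> C y -> C (a *: x + y)).
Variable x : W.

Let dist2_set : set R := fun r => exists2 c, C c & r = nrm2 ip (x - c).
Let dist2 : R := inf dist2_set.

Let dist2_le c : C c -> dist2 <= nrm2 ip (x - c).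
Proof. by move=> Cc; apply: ge_inf; [exists 0 => _ [c' _ ->]; apply: nrm2_ge0 | exists c]. Qed.

Let dist2_approx e : 0 < e -> exists c, C c /\ nrm2 ip (x - c) < dist2 + e.
Proof.
move=> e_gt0; have : dist2 < dist2 + e by rewrite ltrDl.
by move=> /inf_lt [|_ [c Cc ->]]; [exists (nrm2 ip (x - 0)), 0 | exists c].
Qed.

Let near_dist2_close c1 c2 e1 e2 : C c1 -> C c2 ->
  nrm2 ip (x - c1) <= dist2 + e1 -> nrm2 ip (x - c2) <= dist2 + e2 ->
  nrm2 ip (c1 - c2) <= 2 * e1 + 2 * e2.
Proof.
move=> Cc1 Cc2 near1 near2; set mid := 2^-1 *: (c1 + c2).
have Cmid : C mid.
  by rewrite /mid -[_ *: _]addr0; apply: C_comb C0; rewrite -[c1]scale1r; apply: C_comb.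
have sum : (x - c1) + (x - c2) = 2 *: (x - mid).
  by rewrite scalerBr scalerA mulfV ?pnatr_eq0 // scale1r scaler_nat mulr2n opprD addrACA.
have diff : (x - c1) - (x - c2) = c2 - c1 by rewrite opprB addrC addrA subrK.
have := parallelogram hW (x - c1) (x - c2).
rewrite sum diff (nrm2Z hW) (nrm2_subC hW c1); have := dist2_le Cmid; lra.
Qed.

Let near_dist2_orth c0 e : C c0 -> nrm2 ip (x - c0) <= dist2 + e ->
  forall c, C c -> ip (x - c0) c ^+ 2 <= e * nrm2 ip c.
Proof.
move=> Cc0 near c Cc; apply: discriminant_le => [|s]; first exact: nrm2_ge0.
have := dist2_le (C_comb s Cc Cc0).
rewrite opprD addrA addrAC (nrm2B hW) (ipZr hW) (nrm2Z hW); lra.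
Qed.

Lemma approx_of_orthogonal0 : (forall v, (forall c, C c -> ip v c = 0) -> v = 0) ->
  exists c : nat -> W, (forall n, C (c n)) /\ cvg_to ip c x.
Proof.
move=> perp0; have [c c_near] := choice (fun n => dist2_approx (eps_gt0 R n)).
have Cc n := (c_near n).1; have near n := (c_near n).2.
have [p cp] : exists p, cvg_to ip c p.
  apply: cauchy_cvg => // e e_gt0.
  have [N epsN] := eventually_eps_lt (divr_gt0 e_gt0 (ltr0Sn _ 3) : 0 < e / 4%:R).
  exists N => m n Nm Nn; apply: le_lt_trans (near_dist2_close (Cc m) (Cc n) _ _) _.
  - exact: ltW (near m).
  - exact: ltW (near n).
  by have := epsN m Nm; have := epsN n Nn; lra.
suff -> : x = p by exists c.
apply/eqP; rewrite -subr_eq0; apply/eqP/perp0 => c' Cc'.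
apply: (@small_sqr_eq0 _ _ (4%:R * nrm2 ip c')) => e e_gt0.
have [n /(_ n (leqnn n)) [/ltW cnp /ltW epsn]] :=
  eventually_and (cp e e_gt0) (eventually_eps_lt e_gt0).
have -> : x - p = (x - c n) + (c n - p) by rewrite addrA subrK.
rewrite (ipDl hW); apply: (le_trans (sqrD_le _ _)).
have orth := near_dist2_orth (Cc n) (ltW (near n)) Cc'.
have cs := cauchy_schwarz hW (c n - p) c'.
have := ler_wpM2r (nrm2_ge0 hW c') epsn.
have := ler_wpM2r (nrm2_ge0 hW c') cnp.
lra.
Qed.

End DenseSubspace.

Section ProductSpace.
Variables (R : realType) (V : lmodType R) (ip : V -> V -> R).
Hypothesis hV : is_hilbert id ip.

Definition ipP (u v : V * V) : R := ip u.1 v.1 + ip u.2 v.2.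

Lemma nrm2P_ipP u : nrm2P ip u = nrm2 ipP u.
Proof. by []. Qed.

Lemma nrm2_fst_le u : nrm2 ip u.1 <= nrm2 ipP u.
Proof. by rewrite [X in _ <= X]/nrm2 /ipP lerDl (nrm2_ge0 hV). Qed.

Lemma nrm2_snd_le u : nrm2 ip u.2 <= nrm2 ipP u.
Proof. by rewrite [X in _ <= X]/nrm2 /ipP lerDr (nrm2_ge0 hV). Qed.

Lemma cvg_to_fst w l : cvg_to ipP w l -> cvg_to ip (fun n => (w n).1) l.1.
Proof. by move=> wl e /wl [N wlN]; exists N => n /wlN; apply: le_lt_trans (nrm2_fst_le _). Qed.

Lemma cvg_to_snd w l : cvg_to ipP w l -> cvg_to ip (fun n => (w n).2) l.2.
Proof. by move=> wl e /wl [N wlN]; exists N => n /wlN; apply: le_lt_trans (nrm2_snd_le _). Qed.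

Lemma is_hilbert_prod : is_hilbert id ipP.
Proof.
split.
- by move=> a x y z; rewrite /ipP /= !(ipDl hV) !(ipZl hV); ring.
- by move=> x y; rewrite /ipP (ipC hV x.1) (ipC hV x.2).
- by move=> x; rewrite addr_ge0 // (nrm2_ge0 hV).
- move=> [x1 x2] /eqP; rewrite /ipP /= paddr_eq0 ?(nrm2_ge0 hV) //.
  by move=> /andP[/eqP/(nrm2_eq0 hV) -> /eqP/(nrm2_eq0 hV) ->].
apply/completeE => w w_cauchy.
have [l1 wl1] : exists l1, cvg_to ip (fun n => (w n).1) l1.
  apply: (cauchy_cvg hV) => e /w_cauchy [N wN].
  exists N => m n Nm Nn; apply: le_lt_trans (wN m n Nm Nn).
  exact: nrm2_fst_le (w m - w n).
have [l2 wl2] : exists l2, cvg_to ip (fun n => (w n).2) l2.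
  apply: (cauchy_cvg hV) => e /w_cauchy [N wN].
  exists N => m n Nm Nn; apply: le_lt_trans (wN m n Nm Nn).
  exact: nrm2_snd_le (w m - w n).
exists (l1, l2) => e e_gt0; have e2_gt0 : 0 < e / 2 by rewrite divr_gt0.
have [N wlN] := eventually_and (wl1 _ e2_gt0) (wl2 _ e2_gt0).
by exists N => n /wlN [wl1n wl2n]; rewrite -nrm2P_ipP /nrm2P /=; lra.
Qed.

End ProductSpace.

Section Operator.
Variables (R : realType) (V : lmodType R) (ip : V -> V -> R).
Hypothesis hV : is_hilbert id ip.
Variables (D : V -> Prop) (S : V -> V).
Hypothesis hS : is_linear_operator D S.

Let hP : is_hilbert id (ipP ip) := is_hilbert_prod hV.

Definition symmetric : Prop := forall x y, D x -> D y -> ip (S x) y = ip x (S y).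

Lemma D0 : D 0.
Proof. by case: hS. Qed.

Lemma S0 : S 0 = 0.
Proof.
case: hS => D0 _ /(_ 1 0 0 D0 D0); rewrite scaler0 addr0 scale1r => S00.
by apply: (@addrI _ (S 0)); rewrite addr0 -S00.
Qed.

Lemma domM_comb a w1 w2 : domM D w1 -> domM D w2 -> domM D (a *: w1 + w2).
Proof. by case: hS => _ D_comb _ [? ?] [? ?]; split; apply: D_comb. Qed.

Lemma MSS_shift_comb t a w1 w2 : domM D w1 -> domM D w2 ->
  MSS_shift S t (a *: w1 + w2) = a *: MSS_shift S t w1 + MSS_shift S t w2.
Proof.
case: hS w1 w2 => _ _ S_comb [h1 k1] [h2 k2] [/= Dh1 Dk1] [/= Dh2 Dk2].
have comb x x' y y' : a *: (x - t *: y) + (x' - t *: y') = a *: x + x' - t *: (a *: y + y').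
  by rewrite scalerBr scalerDr !scalerA (mulrC a) opprD addrACA.
by rewrite /MSS_shift /MSS /= !S_comb //; congr pair; rewrite ?opprD -?(scalerN a) -comb.
Qed.

Lemma domMB w1 w2 : domM D w1 -> domM D w2 -> domM D (w1 - w2).
Proof. by move=> Dw1 Dw2; rewrite addrC -scaleN1r; apply: domM_comb. Qed.

Lemma MSS_shiftB t w1 w2 : domM D w1 -> domM D w2 ->
  MSS_shift S t (w1 - w2) = MSS_shift S t w1 - MSS_shift S t w2.
Proof.
by move=> Dw1 Dw2; rewrite addrC -scaleN1r MSS_shift_comb // scaleN1r addrC.
Qed.

Lemma self_adjoint_sym : self_adjoint ip D S -> symmetric.
Proof. by move=> sa x y Dx Dy; apply: (sa y (S y)).2. Qed.

Lemma symmetricE : symmetric <-> forall w, domM D w -> ipP ip (MSS S w) w = 0.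
Proof.
split=> [sym [h k] [/= Dh Dk] | skew h k Dh Dk].
  by rewrite /ipP /= (ipNl hV) sym // (ipC hV k) addNr.
by have := skew (h, k) (conj Dh Dk); rewrite /ipP /= (ipNl hV) (ipC hV h); lra.
Qed.

Lemma nrm2_MSS_shift t w : nrm2 (ipP ip) (MSS_shift S t w) =
  nrm2 (ipP ip) (MSS S w) - 2 * t * ipP ip (MSS S w) w + t ^+ 2 * nrm2 (ipP ip) w.
Proof.
have -> : MSS_shift S t w = MSS S w - t *: w by case: w.
by rewrite (nrm2B hP) (ipZr hP) (nrm2Z hP) mulrA.
Qed.

Lemma adjoint_graph_closed (an bn : nat -> V) a b :
  (forall n, adjoint_graph ip D S (an n) (bn n)) -> cvg_to ip an a -> cvg_to ip bn b ->
  adjoint_graph ip D S a b.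
Proof.
move=> adj_n an_a bn_b x Dx; apply/eqP; rewrite -subr_eq0; apply/eqP.
apply: (@small_sqr_eq0 _ _ (2 * (nrm2 ip (S x) + nrm2 ip x))) => e e_gt0.
have [n /(_ n (leqnn n)) [/ltW close_a /ltW close_b]] :=
  eventually_and (an_a e e_gt0) (bn_b e e_gt0).
have -> : ip (S x) a - ip x b = ip (S x) (a - an n) - ip x (b - bn n).
  by rewrite !(ipBr hV) adj_n //; ring.
apply: (le_trans (sqrD_le _ _)); rewrite sqrrN.
have := cauchy_schwarz hV (S x) (a - an n); rewrite (nrm2_subC hV a).
have := cauchy_schwarz hV x (b - bn n); rewrite (nrm2_subC hV b).
have := ler_wpM2l (nrm2_ge0 hV (S x)) close_a.
have := ler_wpM2l (nrm2_ge0 hV x) close_b.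
lra.
Qed.

Lemma shift_lower_bound t w : symmetric -> domM D w ->
  t ^+ 2 * nrm2 (ipP ip) w <= nrm2 (ipP ip) (MSS_shift S t w).
Proof.
by move=> /symmetricE skew Dw; rewrite nrm2_MSS_shift skew // mulr0 subr0 lerDr (nrm2_ge0 hP).
Qed.

Lemma symmetric_of_lower_bound :
  (forall t w, t != 0 -> domM D w ->
     t ^+ 2 * nrm2 (ipP ip) w <= nrm2 (ipP ip) (MSS_shift S t w)) ->
  symmetric.
Proof.
move=> bound; apply/symmetricE => w Dw; apply/eqP; rewrite -sqrf_eq0 eq_le sqr_ge0 andbT.
rewrite -(mulr0 (nrm2 (ipP ip) (MSS S w))); apply: discriminant_le => // s.
have [->|s_neq0] := eqVneq s 0.
  by rewrite !(mulr0, mul0r, subr0, addr0) (nrm2_ge0 hP).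
by have := bound s w s_neq0 Dw; rewrite nrm2_MSS_shift; lra.
Qed.

Lemma opnorm_le_inverse_shift t T : t != 0 -> is_inverse_shift D S t T ->
  opnorm_le ip T `|t|^-1 <->
  (forall w, domM D w -> t ^+ 2 * nrm2 (ipP ip) w <= nrm2 (ipP ip) (MSS_shift S t w)).
Proof.
move=> t_neq0 [T_right T_left]; have t2_gt0 : 0 < t ^+ 2 by rewrite exprn_even_gt0.
have scaled u : (nrm2P ip (T u) <= `|t|^-1 ^+ 2 * nrm2P ip u) =
                (t ^+ 2 * nrm2 (ipP ip) (T u) <= nrm2 (ipP ip) u).
  by rewrite exprVn real_normK ?num_real // ler_pdivlMl.
rewrite /opnorm_le invr_ge0 normr_ge0; split=> [[_ bound] w Dw | bound].
  by have := bound (MSS_shift S t w); rewrite scaled T_left.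
split=> // u; rewrite scaled; have [DTu TuE] := T_right u.
by have := bound _ DTu; rewrite TuE.
Qed.

Lemma shift_injective t w1 w2 : symmetric -> t != 0 -> domM D w1 -> domM D w2 ->
  MSS_shift S t w1 = MSS_shift S t w2 -> w1 = w2.
Proof.
move=> sym t_neq0 Dw1 Dw2 same; apply/eqP; rewrite -subr_eq0; apply/eqP/(nrm2_eq0 hP).
have := shift_lower_bound t sym (domMB Dw1 Dw2); rewrite MSS_shiftB // same subrr.
rewrite [nrm2 _ 0](ip0l hP) pmulr_rle0 ?exprn_even_gt0 // => le0.
by apply/le_anti; rewrite le0 (nrm2_ge0 hP).
Qed.

Lemma shift_range_orthogonal0 t v : self_adjoint ip D S -> t != 0 ->
  (forall w, domM D w -> ipP ip v (MSS_shift S t w) = 0) -> v = 0.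
Proof.
case: v => p q sa t_neq0 perp.
have adj_q : adjoint_graph ip D S q (t *: p).
  move=> h Dh; have := perp (h, 0) (conj Dh D0).
  rewrite /ipP /= S0 oppr0 sub0r scaler0 subr0 (ipNr hV) !(ipZr hV) (ipC hV q) (ipC hV h).
  lra.
have adj_p : adjoint_graph ip D S p (- t *: q).
  move=> k Dk; have := perp (0, k) (conj D0 Dk).
  rewrite /ipP /= S0 scaler0 subr0 sub0r !(ipNr hV) (ipZr hV) scaleNr (ipNr hV) (ipZr hV).
  rewrite (ipC hV p) (ipC hV k); lra.
have [Dq Sq] := (sa _ _).1 adj_q; have [Dp Sp] := (sa _ _).1 adj_p.
have := self_adjoint_sym sa Dp Dq; rewrite -Sq -Sp (ipZl hV) (ipZr hV) => sym.
have : t * nrm2 (ipP ip) (p, q) = 0 by rewrite /nrm2 /ipP /=; lra.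
by move=> /eqP; rewrite mulf_eq0 (negbTE t_neq0) => /eqP /(nrm2_eq0 hP).
Qed.

Lemma shift_surjective t u : self_adjoint ip D S -> t != 0 ->
  exists w, domM D w /\ MSS_shift S t w = u.
Proof.
move=> sa t_neq0; have sym := self_adjoint_sym sa.
have t2_gt0 : 0 < t ^+ 2 by rewrite exprn_even_gt0.
pose range c := exists w, domM D w /\ c = MSS_shift S t w.
have [c [range_c c_u]] : exists c, (forall n, range (c n)) /\ cvg_to (ipP ip) c u.
  apply: (approx_of_orthogonal0 hP).
  - exists 0; split; first by split; apply: D0.
    by rewrite /MSS_shift /MSS /= S0 oppr0 scaler0 subr0.
  - move=> a _ _ [w1 [Dw1 ->]] [w2 [Dw2 ->]].
    by exists (a *: w1 + w2); rewrite MSS_shift_comb //; split=> //; apply: domM_comb.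
  - move=> v perp; apply: shift_range_orthogonal0 sa t_neq0 _ => w Dw.
    by apply: perp; exists w.
have [w /all_and2 [Dw cE]] := choice range_c.
have Mw_u : cvg_to (ipP ip) (fun n => MSS_shift S t (w n)) u.
  by have -> : (fun n => MSS_shift S t (w n)) = c by apply: funext => n; rewrite cE.
have [l w_l] : exists l, cvg_to (ipP ip) w l.
  apply: (cauchy_cvg hP) => e e_gt0.
  have [N MwN] := cvg_cauchy hP Mw_u (mulr_gt0 e_gt0 t2_gt0).
  exists N => m n Nm Nn; rewrite -(ltr_pM2l t2_gt0).
  have := shift_lower_bound t sym (domMB (Dw m) (Dw n)).
  by rewrite MSS_shiftB //; have := MwN m n Nm Nn; lra.
have S1_cvg : cvg_to ip (fun n => S (w n).1) (u.2 + t *: l.2).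
  have -> : (fun n => S (w n).1) = (fun n => (MSS_shift S t (w n)).2 + t *: (w n).2).
    by apply: funext => n; rewrite /= subrK.
  exact (cvg_toD hV (cvg_to_snd hV Mw_u) (cvg_toZ hV t (cvg_to_snd hV w_l))).
have S2_cvg : cvg_to ip (fun n => S (w n).2) (- t *: l.1 - u.1).
  have -> : (fun n => S (w n).2) = (fun n => - t *: (w n).1 - (MSS_shift S t (w n)).1).
    by apply: funext => n; rewrite /= opprB scaleNr addKr opprK.
  exact (cvg_toD hV (cvg_toZ hV _ (cvg_to_fst hV w_l)) (cvg_toN hV (cvg_to_fst hV Mw_u))).
have [Dl1 Sl1] := (sa _ _).1 (adjoint_graph_closed
  (fun n x Dx => sym _ _ Dx (Dw n).1) (cvg_to_fst hV w_l) S1_cvg).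
have [Dl2 Sl2] := (sa _ _).1 (adjoint_graph_closed
  (fun n x Dx => sym _ _ Dx (Dw n).2) (cvg_to_snd hV w_l) S2_cvg).
exists l; split; first by split.
by rewrite [RHS]surjective_pairing /MSS_shift /MSS /= -Sl1 -Sl2 opprB scaleNr opprK !addrK.
Qed.

Lemma self_adjoint_of_symmetric : symmetric ->
  (forall u, exists w, domM D w /\ MSS_shift S 1 w = u) -> self_adjoint ip D S.
Proof.
move=> sym surj y z; split=> [adj | [Dy ->] x Dx]; last exact: sym.
have [[h k] [[/= Dh Dk]]] := surj (- y, z).
rewrite /MSS_shift /MSS /= !scale1r => -[Sk_h Sh_k].
have Sk : S k = y - h by rewrite -[y]opprK -Sk_h opprD !opprK addrK.
have : ip (S k) (y - h) = - nrm2 ip k.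
  by rewrite (ipBr hV) adj // sym // -Sh_k (ipBr hV) /nrm2; ring.
rewrite Sk => /eqP; rewrite -addr_eq0 paddr_eq0 ?(nrm2_ge0 hV) //.
move=> /andP[/eqP/(nrm2_eq0 hV)/eqP + /eqP/(nrm2_eq0 hV) k0].
by rewrite subr_eq0 => /eqP ->; rewrite -Sh_k k0 subr0.
Qed.

Lemma densely_defined_of_self_adjoint : self_adjoint ip D S -> densely_defined ip D.
Proof.
move=> sa x e e_gt0; case: hS => _ D_comb _.
have perp0 v : (forall c, D c -> ip v c = 0) -> v = 0.
  move=> perp; have adj : adjoint_graph ip D S 0 v.
    by move=> c Dc; rewrite (ip0r hV) (ipC hV) perp.
  by have [_ ->] := (sa 0 v).1 adj; apply: S0.
have [c [Dc c_x]] := approx_of_orthogonal0 hV D0 D_comb x perp0.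
have [N cN] := c_x _ (exprn_gt0 2 e_gt0).
by exists (c N) => //; rewrite (nrm2_subC hV); apply: cN.
Qed.

Lemma resolvent_of_self_adjoint t : self_adjoint ip D S -> t != 0 ->
  in_resolvent ip D S t /\
  forall T, is_inverse_shift D S t T -> opnorm_le ip T `|t|^-1.
Proof.
move=> sa t_neq0; have sym := self_adjoint_sym sa.
have inj w1 w2 := @shift_injective t w1 w2 sym t_neq0.
have T_bound T : is_inverse_shift D S t T -> opnorm_le ip T `|t|^-1.
  move=> T_inv; apply/(opnorm_le_inverse_shift t_neq0 T_inv) => w.
  exact: shift_lower_bound.
have [T T_right] := choice (fun u => shift_surjective u sa t_neq0).
have T_inv : is_inverse_shift D S t T.
  split=> // w Dw; have [DT TE] := T_right (MSS_shift S t w).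
  exact: inj.
by split=> //; split=> //; exists T => //; exists `|t|^-1; apply: T_bound.
Qed.

Lemma self_adjoint_of_resolvent :
  (forall t, t != 0 -> in_resolvent ip D S t /\
     forall T, is_inverse_shift D S t T -> opnorm_le ip T `|t|^-1) ->
  densely_defined ip D /\ self_adjoint ip D S.
Proof.
move=> res.
have bound t w : t != 0 -> domM D w ->
    t ^+ 2 * nrm2 (ipP ip) w <= nrm2 (ipP ip) (MSS_shift S t w).
  move=> t_neq0; have [[_ [T T_inv _]] T_bound] := res t t_neq0.
  exact: (opnorm_le_inverse_shift t_neq0 T_inv).1 (T_bound T T_inv) w.
have sa : self_adjoint ip D S.
  apply: self_adjoint_of_symmetric (symmetric_of_lower_bound bound) _ => u.
  have [[_ [T [T_right _] _]] _] := res 1 (oner_neq0 R).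
  by exists (T u).
by split=> //; apply: densely_defined_of_self_adjoint.
Qed.

Lemma corollary_equiv_real : corollary_equiv ip D S.
Proof.
split=> [[_ sa] t _ t_neq0 | res]; first exact: resolvent_of_self_adjoint.
by apply: self_adjoint_of_resolvent => t t_neq0; apply: res; rewrite ?num_real.
Qed.

End Operator.

Local Open Scope complex_scope.

Section RealScalars.
Variables (R : realType) (V : lmodType R[i]).

Definition realV : Type := V.
HB.instance Definition _ := GRing.Zmodule.on realV.

Definition scaleR (r : R) (x : realV) : realV := r%:C *: (x : V).

Lemma scaleRA a b x : scaleR a (scaleR b x) = scaleR (a * b) x.
Proof. by rewrite /scaleR scalerA rmorphM. Qed.

Lemma scale1R : left_id 1 scaleR.
Proof. by move=> x; rewrite /scaleR rmorph1 scale1r. Qed.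

Lemma scaleRDr : right_distributive scaleR +%R.
Proof. by move=> a x y; rewrite /scaleR scalerDr. Qed.

Lemma scaleRDl x : {morph scaleR^~ x : a b / a + b}.
Proof. by move=> a b; rewrite /scaleR rmorphD scalerDl. Qed.

HB.instance Definition _ :=
  GRing.Zmodule_isLmodule.Build R realV scaleRA scale1R scaleRDr scaleRDl.

End RealScalars.

Lemma ge0_complexE (R : realType) (z : R[i]) : 0 <= z -> z = (complex.Re z)%:C.
Proof. by move=> /ger0_real/RRe_real. Qed.

Lemma Re_gt0 (R : realType) (z : R[i]) : 0 < z -> 0 < complex.Re z.
Proof. by rewrite ltcE => /andP[]. Qed.

Section ComplexHilbert.
Variables (R : realType) (V : lmodType R[i]) (ip : V -> V -> R[i]).
Hypothesis hV : is_hilbert (@conjc R) ip.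

Definition ipRe (x y : realV V) : R := complex.Re (ip x y).

Lemma nrm2_Re x : nrm2 ip x = (nrm2 ipRe x)%:C.
Proof. by case: hV => _ _ /(_ x) /ge0_complexE. Qed.

Lemma nrm2P_Re u : nrm2P ip u = (nrm2P ipRe u)%:C.
Proof. by rewrite /nrm2P !nrm2_Re rmorphD. Qed.

Lemma is_hilbert_Re : is_hilbert id ipRe.
Proof.
case: hV => ip_comb ip_conj ip_ge0 ip_eq0 ip_complete; split.
- move=> a x y z; rewrite /ipRe /= [ip _ _]ip_comb.
  by case: (ip x z) => a1 b1; case: (ip y z) => a2 b2 /=; ring.
- by move=> x y; rewrite /ipRe ip_conj; case: (ip y x).
- by move=> x; move: (ip_ge0 x); rewrite lecE => /andP[].
- move=> x ipRe0; apply: ip_eq0; rewrite (ge0_complexE (ip_ge0 x)).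
  by move: ipRe0; rewrite /ipRe => ->.
move=> u u_cauchy.
have [l u_l] : exists l : V, forall e : R[i], 0 < e -> exists N : nat, forall n : nat,
    (N <= n)%N -> nrm2 ip (u n - l) < e ^+ 2.
  apply: ip_complete => e e_gt0; rewrite [e]ge0_complexE ?ltW //.
  have [N uN] := u_cauchy _ (Re_gt0 e_gt0).
  by exists N => m n Nm Nn; rewrite nrm2_Re -rmorphXn ltcR; apply: uN.
exists l => e e_gt0; have /u_l [N lN] : 0 < e%:C by rewrite ltcR.
by exists N => n /lN; rewrite nrm2_Re -rmorphXn ltcR.
Qed.

Variables (D : V -> Prop) (S : V -> V).
Hypothesis hS : is_linear_operator D S.

Lemma is_linear_operator_Re : is_linear_operator (V := realV V) D S.
Proof. by case: hS => D0 D_comb S_comb; split=> // a; [apply: D_comb | apply: S_comb]. Qed.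

Lemma adjoint_graph_Re y z : adjoint_graph ip D S y z <-> adjoint_graph ipRe D S y z.
Proof.
split=> [adj x Dx | adj x Dx]; first by rewrite /ipRe adj.
case: hS => D0 D_comb S_comb.
have iS : S ('i *: x + 0) = 'i *: S x.
  by rewrite S_comb // (S0 is_linear_operator_Re) addr0.
have := adj _ (D_comb 'i x 0 Dx D0); have := adj x Dx.
rewrite /ipRe iS addr0 !(ipZl hV).
by case: (ip (S x) y) => a1 b1; case: (ip x z) => a2 b2 /= -> ?; congr (_ +i* _); lra.
Qed.

Lemma self_adjoint_Re : self_adjoint ip D S <-> self_adjoint ipRe D S.
Proof. by split=> sa y z; [rewrite -adjoint_graph_Re | rewrite adjoint_graph_Re]. Qed.

Lemma densely_defined_Re : densely_defined ip D <-> densely_defined ipRe D.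
Proof.
split=> dense x e e_gt0.
  have /(dense x) [y Dy close] : 0 < e%:C by rewrite ltcR.
  by exists y => //; move: close; rewrite nrm2_Re -rmorphXn ltcR.
have [y Dy close] := dense x _ (Re_gt0 e_gt0).
by exists y => //; rewrite nrm2_Re [e]ge0_complexE ?ltW // -rmorphXn ltcR.
Qed.

Lemma opnorm_le_Re T (c : R) : opnorm_le ip T c%:C <-> opnorm_le ipRe T c.
Proof.
rewrite /opnorm_le ler0c.
by split=> -[c_ge0 bound]; split=> // u; move: (bound u);
  rewrite !nrm2P_Re -rmorphXn -rmorphM lecR.
Qed.

Lemma in_resolvent_Re (r : R) : in_resolvent ip D S r%:C <-> in_resolvent ipRe D S r.
Proof.
rewrite /in_resolvent /bounded_op; split=> -[inj [T T_inv [c T_c]]]; split=> //;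
  exists T => //.
  have c_ge0 := T_c.1.
  by exists (complex.Re c); apply/opnorm_le_Re; rewrite -ge0_complexE.
by exists c%:C; apply/opnorm_le_Re.
Qed.

Lemma corollary_equiv_complex : corollary_equiv ip D S.
Proof.
have [real_res real_sa] := corollary_equiv_real is_hilbert_Re is_linear_operator_Re.
have norm_inv (r : R) : `|r%:C|^-1 = (`|r|^-1)%:C.
  by rewrite normc_def /= expr0n addr0 sqrtr_sqr fmorphV.
split=> [[dense sa] t /complex_realP [r ->] r_neq0 | res].
  have {}r_neq0 : r != 0 by apply: contraNneq r_neq0 => ->.
  have sa_Re : densely_defined ipRe D /\ self_adjoint ipRe D S.
    by split; [apply/densely_defined_Re | apply/self_adjoint_Re].
  have [res bound] := real_res sa_Re r (num_real r) r_neq0.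
  split; first exact/in_resolvent_Re.
  by move=> T T_inv; rewrite norm_inv; apply/opnorm_le_Re/bound.
have [dense sa] : densely_defined ipRe D /\ self_adjoint ipRe D S.
  apply: real_sa => r _ r_neq0.
  have r_real : r%:C \is Num.real by apply/complex_realP; exists r.
  have rC_neq0 : r%:C != 0 by apply: contra_neq r_neq0 => /complexI.
  have [res_r bound] := res _ r_real rC_neq0.
  split; first exact/in_resolvent_Re.
  by move=> T T_inv; apply/opnorm_le_Re; rewrite -norm_inv; apply: bound.
by split; [apply/densely_defined_Re | apply/self_adjoint_Re].
Qed.

End ComplexHilbert.

Theorem corollary4p2 :
  (* real Hilbert spaces *)
  (forall (R : realType) (V : lmodType R) (ip : V -> V -> R)
          (D : V -> Prop) (S : V -> V),
     is_hilbert id ip -> is_linear_operator D S ->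
     corollary_equiv ip D S) /\
  (* complex Hilbert spaces *)
  (forall (R : realType) (V : lmodType R[i]) (ip : V -> V -> R[i])
          (D : V -> Prop) (S : V -> V),
     is_hilbert (@conjc R) ip -> is_linear_operator D S ->
     corollary_equiv ip D S).
Proof.
split=> R V ip D S hV hS; [exact: corollary_equiv_real | exact: corollary_equiv_complex].
Qed.
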